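(* Let $G$ be a finite group. Then every self-homotopy equivalence of the quasi-schemoid $\widetilde{S}(\imath G)=(\widetilde{\imath G},\{\mathcal{G}_s\}_{s\in G})$ is an isomorphism.
   Context: For a groupoid $\mathcal{H}$, the quasi-schemoid $\widetilde{S}(\mathcal{H})=(\widetilde{\mathcal{H}},S)$ has $ob(\widetilde{\mathcal{H}})=mor(\mathcal{H})$, $\mathrm{Hom}_{\widetilde{\mathcal{H}}}(g,h)=\{(h,g)\}$ if $t(h)=t(g)$ and empty otherwise (composition $(k,h)\circ(h,g)=(k,g)$), and partition $S=\{\mathcal{G}_f\}_{f\in mor(\mathcal{H})}$ with $\mathcal{G}_f=\{(k,l)\mid k^{-1}l=f\}$. For a group $G$, $\imath G$ is $G$ regarded as a groupoid with one object; thus objects of $\widetilde{\imath G}$ are elements of $G$, there is exactly one morphism $(h,g)\colon g\to h$ for all $g,h$, and $\mathcal{G}_s=\{(k,l)\mid k^{-1}l=s\}$. A morphism of quasi-schemoids is a functor sending each block of the source partition into some block of the target partition. Product: $(\mathcal{C},S)\times(\mathcal{E},S')=(\mathcal{C}\times\mathcal{E},\{\sigma\times\tau\})$. $[1]$ has objects $0,1$ and one non-identity morphism $0\to1$; $I=([1],\{\{f\}\}_{f})$. A homotopy $H\colon F\Rightarrow G$ is a morphism $H\colon(\mathcal{C},S)\times I\to(\mathcal{D},S')$ with $H\circ\varepsilon_0=F$, $H\circ\varepsilon_1=G$ ($\varepsilon_i(a)=(a,i)$, $\varepsilon_i(f)=(f,1_i)$). $F\sim G$ means there is a homotopy $F\Rightarrow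 G$ or $G\Rightarrow F$; $F\simeq G$ means a finite chain $F=F_0\sim\cdots\sim F_n=G$. A self-homotopy equivalence of $A$ is a morphism $F\colon A\to A$ for which there is $G'\colon A\to A$ with $FG'\simeq1$ and $G'F\simeq1$. *)

From HB Require Import structures.
From mathcomp Require Import all_boot all_fingroup.
Set Implicit Arguments. Unset Strict Implicit. Unset Printing Implicit Defensive.

(** * Small categories, presented by their object and morphism sets.
    [ccomp g f] is g o f, meaningful when [csrc g = ctgt f]. *)
Record Cat := {
  cob : Type; cmor : Type;
  csrc : cmor -> cob; ctgt : cmor -> cob;
  cid : cob -> cmor; ccomp : cmor -> cmor -> cmor;
  csrc_id : forall x, csrc (cid x) = x;
  ctgt_id : forall x, ctgt (cid x) = x;
  csrc_comp : forall g f, csrc g = ctgt f -> csrc (ccomp g f) = csrc f;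
  ctgt_comp : forall g f, csrc g = ctgt f -> ctgt (ccomp g f) = ctgt g;
  ccomp_idl : forall f, ccomp (cid (ctgt f)) f = f;
  ccomp_idr : forall f, ccomp f (cid (csrc f)) = f;
  ccomp_assoc : forall h g f, csrc h = ctgt g -> csrc g = ctgt f ->
     ccomp h (ccomp g f) = ccomp (ccomp h g) f }.

Record Functor (C D : Cat) := {
  fob : cob C -> cob D; fmor : cmor C -> cmor D;
  f_src : forall u, csrc (fmor u) = fob (csrc u);
  f_tgt : forall u, ctgt (fmor u) = fob (ctgt u);
  f_id : forall x, fmor (cid x) = cid (fob x);
  f_comp : forall g f, csrc g = ctgt f -> fmor (ccomp g f) = ccomp (fmor g) (fmor f) }.

Definition feq (C D : Cat) (F G : Functor C D) : Prop :=
  (forall x, fob F x = fob G x) /\ (forall u, fmor F u = fmor G u).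

Program Definition fun_comp (C D E : Cat) (G : Functor D E) (F : Functor C D)
  : Functor C E :=
  {| fob := fun x => fob G (fob F x); fmor := fun u => fmor G (fmor F u) |}.
Next Obligation. intros; simpl in *. by rewrite f_src f_src. Qed.
Next Obligation. intros; simpl in *. by rewrite f_tgt f_tgt. Qed.
Next Obligation. intros; simpl in *. by rewrite f_id f_id. Qed.
Next Obligation. intros; simpl in *.
rewrite (f_comp F) // (f_comp G) //. by rewrite f_src f_tgt H.
Qed.

Definition fun_id (C : Cat) : Functor C C :=
  @Build_Functor C C (fun x => x) (fun u => u)
    (fun u => erefl) (fun u => erefl) (fun x => erefl) (fun g f _ => erefl).

(** * Quasi-schemoids: a category with a partition of its morphism set.
    The partition is given by a labelling [lab] of morphisms: the blocks are
    the (nonempty) fibres of [lab]. *)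
Record QSchemoid := { qcat :> Cat; qlab : Type; lab : cmor qcat -> qlab }.

Record QSmor (A B : QSchemoid) := {
  qfun :> Functor A B;
  qblock : forall u v, lab u = lab v -> lab (fmor qfun u) = lab (fmor qfun v) }.

Definition qcomp (A B C : QSchemoid) (G : QSmor B C) (F : QSmor A B)
  : QSmor A C :=
  @Build_QSmor A C (fun_comp G F)
    (fun u v e => qblock G (qblock F e)).

Definition qid (A : QSchemoid) : QSmor A A :=
  @Build_QSmor A A (fun_id A) (fun u v e => e).

Program Definition prod_cat (C D : Cat) : Cat :=
  {| cob := (cob C * cob D)%type; cmor := (cmor C * cmor D)%type;
     csrc := fun u => (csrc u.1, csrc u.2);
     ctgt := fun u => (ctgt u.1, ctgt u.2);
     cid := fun x => (cid x.1, cid x.2);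
     ccomp := fun g f => (ccomp g.1 f.1, ccomp g.2 f.2) |}.
Next Obligation. intros; simpl in *. by case: x => a b; rewrite /= !csrc_id. Qed.
Next Obligation. intros; simpl in *. by case: x => a b; rewrite /= !ctgt_id. Qed.
Next Obligation. intros; simpl in *. case: H => H1 H2. by rewrite !csrc_comp. Qed.
Next Obligation. intros; simpl in *. case: H => H1 H2. by rewrite !ctgt_comp. Qed.
Next Obligation. intros; simpl in *. by case: f => a b; rewrite /= !ccomp_idl. Qed.
Next Obligation. intros; simpl in *. by case: f => a b; rewrite /= !ccomp_idr. Qed.
Next Obligation. intros; simpl in *.
case: H => H1 H2; case: H0 => H3 H4. by rewrite !ccomp_assoc.
Qed.

Definition qprod (A B : QSchemoid) : QSchemoid :=
  {| qcat := prod_cat A B; qlab := (qlab A * qlab B)%type;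
     lab := fun u : cmor (prod_cat A B) => (lab u.1, lab u.2) |}.

(** * The category [1] (objects false = 0, true = 1) and I = ([1], {{f}}_f) *)
Inductive mor1 := id0 | id1 | f01.
Definition src1 (u : mor1) : bool := if u is id1 then true else false.
Definition tgt1 (u : mor1) : bool := if u is id0 then false else true.
Definition id1m (b : bool) : mor1 := if b then id1 else id0.
Definition comp1 (g f : mor1) : mor1 :=
  match g, f with
  | f01, _ => f01 | _, f01 => f01
  | id0, _ => id0 | id1, _ => id1
  end.

Program Definition cat1 : Cat :=
  {| cob := bool; cmor := mor1; csrc := src1; ctgt := tgt1;
     cid := id1m; ccomp := comp1 |}.
Solve All Obligations with
  intros; repeat (match goal with x : mor1 |- _ => destruct x | x : bool |- _ => destruct x end);
  simpl in *; try discriminate; reflexivity.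

Definition Iqs : QSchemoid := {| qcat := cat1; qlab := mor1; lab := fun u => u |}.

Program Definition eps (A : QSchemoid) (i : bool) : QSmor A (qprod A Iqs) :=
  {| qfun := {| fob := fun a : cob A => (a, i) : cob (qprod A Iqs);
                fmor := fun f : cmor A => (f, cid (i : cob cat1)) : cmor (qprod A Iqs) |} |}.
Next Obligation. intros; simpl in *. by case: i. Qed.
Next Obligation. intros; simpl in *. by case: i. Qed.
Next Obligation. intros; simpl in *. by case: i. Qed.
Next Obligation. intros; simpl in *. by case: i. Qed.
Next Obligation. intros; simpl in *. by rewrite H. Qed.

Definition is_homotopy (A B : QSchemoid) (F G : QSmor A B)
  (H : QSmor (qprod A Iqs) B) : Prop :=
  feq (qcomp H (eps A false)) F /\ feq (qcomp H (eps A true)) G.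

Definition htp_sim (A B : QSchemoid) (F G : QSmor A B) : Prop :=
  (exists H, is_homotopy F G H) \/ (exists H, is_homotopy G F H).

Inductive htp_equiv (A B : QSchemoid) : QSmor A B -> QSmor A B -> Prop :=
| htp_refl : forall F G : QSmor A B, feq F G -> htp_equiv F G
| htp_step : forall F G K : QSmor A B, htp_equiv F G -> htp_sim G K -> htp_equiv F K.

Definition self_htp_equiv (A : QSchemoid) (F : QSmor A A) : Prop :=
  exists G' : QSmor A A,
    htp_equiv (qcomp F G') (qid A) /\ htp_equiv (qcomp G' F) (qid A).

Definition qs_iso (A B : QSchemoid) (F : QSmor A B) : Prop :=
  exists G' : QSmor B A, feq (qcomp F G') (qid B) /\ feq (qcomp G' F) (qid A).

(** * The quasi-schemoid  S~(iG) for a group G: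
    objects = elements of G, one morphism (h,g) : g -> h for all g h,
    (k,h) o (h,g) = (k,g), blocks G_s = {(k,l) | k^-1 l = s}. *)
Section SiG.
Variable gT : finGroupType.
Local Open Scope group_scope.

Program Definition catiG : Cat :=
  {| cob := gT; cmor := (gT * gT)%type;
     csrc := fun u => u.2; ctgt := fun u => u.1;
     cid := fun x => (x, x); ccomp := fun v u => (v.1, u.2) |}.
Solve All Obligations with
  intros; simpl in *;
  repeat (match goal with p : prod _ _ |- _ => destruct p end); reflexivity.

Definition SiG : QSchemoid :=
  {| qcat := catiG; qlab := gT;
     lab := fun u : cmor catiG => (u.1)^-1 * u.2 |}.
End SiG.

From mathcomp Require Import all_boot all_fingroup.

(* A self-map F of S~(iG) satisfies F(a)^-1 F(b) = F(1)^-1 F(a^-1 b), because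
   (a, b) and (1, a^-1 b) lie in the same block.  A homotopy H : F => G sends
   the morphism ((a, a), 0 -> 1) to (G a, F a), and all these morphisms lie in
   one block; so G(a)^-1 F(a) does not depend on a, and F is injective on
   objects iff G is.  If G' F is homotopy equivalent to the identity, F is
   therefore injective, hence bijective since G is finite.  As S~(iG) has
   exactly one morphism between any two objects, the inverse bijection is a
   functor, and the translation rule above shows it preserves blocks. *)

Set Implicit Arguments. Unset Strict Implicit. Unset Printing Implicit Defensive.
Local Open Scope group_scope.

Lemma catiG_fmorE (C : Cat) (gT : finGroupType) (F : Functor C (catiG gT))
    (u : cmor C) :
  fmor F u = (fob F (ctgt u), fob F (csrc u)).
Proof. by have := f_src F u; have := f_tgt F u; case: (fmor F u) => a b /= <- <-. Qed.

Section SiGMorphisms.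
Variables gT hT : finGroupType.

Lemma SiG_fobM (F : QSmor (SiG gT) (SiG hT)) (a b : gT) :
  (fob F a)^-1 * fob F b = (fob F 1)^-1 * fob F (a^-1 * b).
Proof.
have same_block : lab ((a, b) : cmor (SiG gT)) = lab ((1, a^-1 * b) : cmor (SiG gT)).
  by rewrite /= invg1 mul1g.
by have := qblock F same_block; rewrite !catiG_fmorE.
Qed.

Lemma homotopy_offset_const (F G : QSmor (SiG gT) (SiG hT)) H :
    is_homotopy F G H ->
  forall a b : gT, (fob G a)^-1 * fob F a = (fob G b)^-1 * fob F b.
Proof.
case=> [[HF _] [HG _]] a b.
pose path (x : gT) : cmor (qprod (SiG gT) Iqs) := ((x, x), f01).
have same_block : lab (path a) = lab (path b) by rewrite /= !mulVg.
have := qblock H same_block; rewrite !catiG_fmorE /=.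
by have := HF a; have := HF b; have := HG a; have := HG b => /= -> -> -> ->.
Qed.

Lemma homotopy_inj (F G : QSmor (SiG gT) (SiG hT)) H : is_homotopy F G H ->
  injective (fob F) <-> injective (fob G).
Proof.
move=> /homotopy_offset_const offset; split=> injF a b e; apply: injF.
- by have := offset a b; rewrite e => /mulgI.
- by have := offset a b; rewrite e => /mulIg /invg_inj.
Qed.

Lemma feq_inj (F G : QSmor (SiG gT) (SiG hT)) : feq F G ->
  injective (fob F) <-> injective (fob G).
Proof.
by case=> eFG _; split=> inj a b e; apply: inj; rewrite ?eFG // -!eFG.
Qed.

Lemma htp_equiv_inj (F G : QSmor (SiG gT) (SiG hT)) : htp_equiv F G ->
  injective (fob F) <-> injective (fob G).
Proof.
elim=> [F0 G0 /feq_inj // | F0 G0 K _ IH [[H /homotopy_inj] | [H /homotopy_inj]]];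
  tauto.
Qed.

End SiGMorphisms.

Section InverseOfInjective.
Variables (gT : finGroupType) (F : QSmor (SiG gT) (SiG gT)).
Hypothesis injF : injective (fob F).
Let Finv := invF injF.

Program Definition SiG_inv_functor : Functor (SiG gT) (SiG gT) :=
  {| fob := Finv; fmor := fun u : cmor (SiG gT) => ((Finv u.1, Finv u.2) : cmor (SiG gT)) |}.
Solve All Obligations with by [].

Lemma SiG_inv_block (u v : cmor (SiG gT)) :
  lab u = lab v -> lab (fmor SiG_inv_functor u) = lab (fmor SiG_inv_functor v).
Proof.
case: u v => a b [c d] /= same_block.
have := SiG_fobM F (Finv a) (Finv b); have := SiG_fobM F (Finv c) (Finv d).
by rewrite !f_invF same_block => -> /mulgI /injF.
Qed.

Definition SiG_inv : QSmor (SiG gT) (SiG gT) :=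
  @Build_QSmor _ _ SiG_inv_functor SiG_inv_block.

Lemma SiG_inj_iso : qs_iso F.
Proof.
exists SiG_inv; split; split=> [x | u] /=; rewrite ?catiG_fmorE /=.
- exact: f_invF.
- by rewrite !f_invF; case: u.
- exact: invF_f.
- by rewrite /Finv !(invF_f injF); case: u.
Qed.

End InverseOfInjective.

Theorem proposition4p5 (gT : finGroupType) (F : QSmor (SiG gT) (SiG gT)) :
  self_htp_equiv F -> qs_iso F.
Proof.
case=> G' [_ /htp_equiv_inj G'F_id].
have injG'F : injective (fob (qcomp G' F)) by apply/G'F_id.
exact/SiG_inj_iso/(inj_compr injG'F).
Qed.
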